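(* Let $t$ be a positive integer, let $\overline{\mathcal{G}}_t$, $\overline{\mathcal{P}}_t$ and $\phi:\overline{\mathcal{G}}_t\to\overline{\mathcal{P}}_t$ be as described in the context, let $\pi\in\overline{\mathcal{G}}_t$ and $\mu=\phi(\pi)$. Then (i) $\ell(\pi)\le \ell(\mu)$; (ii) $\ell(\pi)\ge \ell(\mu)-m(\mu)+\delta_{\ell(\mu),m(\mu)}$, where $\delta$ is the Kronecker delta.
   Context: An overpartition is a partition (weakly decreasing sequence of positive integers) in which the first occurrence of each distinct part size may be overlined; an overlined part $\overline{a}$ has size $a$. $\ell(\lambda)$ is the number of parts of $\lambda$; for $\mu\in\overline{\mathcal{P}}_t$, $m(\mu)$ is the number of parts of $\mu$ equal to $t$. $\overline{\mathcal{G}}_t$ is the set of nonempty overpartitions whose largest and smallest parts differ by at most $t$, with the largest part not overlined whenever this difference is exactly $t$. $\overline{\mathcal{P}}_t$ is the set of nonempty overpartitions with all parts at most $t$ and no part equal to $t$ overlined. For $\pi=(\pi_1,\dots,\pi_\ell)\in\overline{\mathcal{G}}_t$, let $s=\lfloor \pi_\ell/t\rfloor$ and let $k$ be the positive integer with $\pi_k\ge (s+1)t>\pi_{k+1}$ if it exists, $k=0$ otherwise; then $\phi(\pi)$ is the overpartition $(t,\dots,t,\ \pi_{k+1}-st,\dots,\pi_\ell-st,\ \pi_1-(s+1)t,\dots,\pi_k-(s+1)t)$ with exactly $s(\ell-k)+(s+1)k$ initial non-overlined parts equal to $t$, where each $\pi_i-st$ or $\pi_i-(s+1)t$ is overlined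 exactly when $\pi_i$ is, and all parts equal to $0$ are deleted. (This $\phi(\pi)$ lies in $\overline{\mathcal{P}}_t$.) *)

From mathcomp Require Import all_boot.
Set Implicit Arguments. Unset Strict Implicit. Unset Printing Implicit Defensive.

(* An overpartition is a list of parts (size, overlined?), listed in weakly
   decreasing order of size.  An overlined part must be the first occurrence
   of its size, i.e. the preceding part (if any) is strictly larger. *)
Definition opart := (nat * bool)%type.
Definition overpartition := seq opart.

Definition op_step (a b : opart) : bool :=
  (b.1 <= a.1) && (b.2 ==> (b.1 < a.1)).

Definition is_overpartition (p : overpartition) : bool :=
  all (fun x => 0 < x.1) p && sorted op_step p.

Definition ell (p : overpartition) : nat := size p.

Definition largest (p : overpartition) : nat := (head (0, false) p).1.
Definition smallest (p : overpartition) : nat := (last (0, false) p).1.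

Definition in_Gt (t : nat) (p : overpartition) : bool :=
  [&& is_overpartition p, p != [::],
      largest p - smallest p <= t &
      (largest p - smallest p == t) ==> ~~ (head (0, false) p).2].

Definition in_Pt (t : nat) (p : overpartition) : bool :=
  [&& is_overpartition p, p != [::] &
      all (fun x => (x.1 <= t) && ((x.1 == t) ==> ~~ x.2)) p].

Definition mult_t (t : nat) (p : overpartition) : nat :=
  count (fun x => x.1 == t) p.

(* The map phi.  s = floor(pi_l / t); k = number of parts >= (s+1) t
   (since pi is weakly decreasing and pi_l < (s+1)t, this is the unique
   k with pi_k >= (s+1)t > pi_{k+1}, or 0 if there is none). *)
Definition phi (t : nat) (p : overpartition) : overpartition :=
  let l := size p in
  let s := smallest p %/ t in
  let k := count (fun x => (s.+1 * t) <= x.1) p in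
  let big := take k p in
  let rest := drop k p in
  filter (fun x => 0 < x.1)
    (nseq (s * (l - k) + s.+1 * k) (t, false)
     ++ [seq (x.1 - s * t, x.2) | x <- rest]
     ++ [seq (x.1 - s.+1 * t, x.2) | x <- big]).

From mathcomp Require Import all_boot.
From mathcomp Require Import zify.

(* Before its zero parts are deleted, [phi t pi] consists of [N = phi_copies]
   copies of [t] followed by the [ell pi] parts of [phi_shifted].  Only shifted
   parts can vanish, so [ell mu - m(mu)] counts at most [ell pi] of them, which
   gives (ii).  For (i), either [s > 0] and already [N >= ell pi], or [s = 0]:
   then [N = k] and the [ell pi - k] parts shifted by [s t = 0] stay positive.
   Of [pi \in G_t] only the positivity of the parts and [pi != [::]] are used. *)

Lemma subn_count_delta_le_size (T : Type) (a b : pred T) (xs : seq T) :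
  subpred a b -> 0 < size xs ->
  count b xs - count a xs + (count b xs == count a xs) <= size xs.
Proof.
move=> sub_ab xs_gt0; have le_ab : count a xs <= count b xs by exact: sub_count.
have le_b := count_size b xs.
by case: eqP => [-> | _] /=; lia.
Qed.

Section PhiShape.

Variables (t : nat) (p : overpartition).

Let s := smallest p %/ t.
Let k := count (fun x : opart => s.+1 * t <= x.1) p.

Definition phi_copies : nat := s * (size p - k) + s.+1 * k.

Definition phi_shifted : overpartition :=
  [seq (x.1 - s * t, x.2) | x <- drop k p] ++
  [seq (x.1 - s.+1 * t, x.2) | x <- take k p].

Lemma phiE :
  phi t p = [seq x <- nseq phi_copies (t, false) ++ phi_shifted | 0 < x.1].
Proof. by []. Qed.

Lemma size_phi_shifted : size phi_shifted = size p.
Proof.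
have k_le : k <= size p by exact: count_size.
by rewrite size_cat !size_map size_drop size_takel // subnK.
Qed.

Hypothesis t_gt0 : 0 < t.

Lemma ell_phi :
  ell (phi t p) = phi_copies + count (fun x : opart => 0 < x.1) phi_shifted.
Proof. by rewrite phiE /ell size_filter count_cat count_nseq /= t_gt0 mul1n. Qed.

Lemma mult_t_phi :
  mult_t t (phi t p) = phi_copies + count (fun x : opart => x.1 == t) phi_shifted.
Proof.
rewrite phiE /mult_t count_filter count_cat count_nseq /= eqxx t_gt0 mul1n.
by congr (_ + _); apply: eq_count => -[n b] /=; case: eqP => // ->.
Qed.

Lemma size_le_phi_copies_add_count :
  all (fun x : opart => 0 < x.1) p ->
  size p <= phi_copies + count (fun x : opart => 0 < x.1) phi_shifted.
Proof.
move=> p_pos; have k_le : k <= size p by exact: count_size.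
rewrite /phi_copies; case: (posnP s) => [s0 | s_gt0]; last by nia.
have shifted_pos : count (fun x : opart => 0 < x.1)
    [seq (x.1 - s * t, x.2) | x <- drop k p] = size p - k.
  apply/eqP; rewrite -(size_drop k p) -(size_map (fun x => (x.1 - s * t, x.2))).
  rewrite -all_count all_map; apply/allP => x /mem_drop x_p /=.
  by rewrite s0 mul0n subn0 (allP p_pos x x_p).
rewrite /phi_shifted count_cat shifted_pos s0 mul0n mul1n add0n addnA subnKC //.
exact: leq_addr.
Qed.

End PhiShape.

Theorem mainTheorem3 (t : nat) (pi : overpartition) :
  0 < t -> in_Gt t pi ->
  let mu := phi t pi in
  ell pi <= ell mu /\
  ell mu - mult_t t mu + (ell mu == mult_t t mu) <= ell pi.
Proof.
move=> t_gt0 /and4P[/andP[pi_pos _] pi_nil _ _] /=.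
rewrite ell_phi // mult_t_phi // subnDl eqn_add2l; split.
  exact: size_le_phi_copies_add_count.
rewrite /ell -(size_phi_shifted t pi); apply: subn_count_delta_le_size.
  by move=> -[n b] /= /eqP ->.
by rewrite size_phi_shifted lt0n size_eq0.
Qed.
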